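(* For any contraction $C\in M_n(\mathbb{C})$, the following are equivalent: (i) every level $T_j$ ($j\ge0$) of the partial isometry tower of $C$ has the Circularity property; (ii) $C$ has defect-pencil Circularity.
   Context: For $X\in M_n(\mathbb{C})$, $H_X(\theta):=\frac12(e^{-i\theta}X+e^{i\theta}X^* )$. $X$ has the Circularity property if the spectrum of $H_X(\theta)$ is independent of $\theta\in\mathbb{R}$. A contraction is a matrix with $\|C\|\le1$. A contraction $C$ has defect-pencil Circularity if for every real $\tau$ the spectrum of $H_C(\theta)+\tau(I-C^*C)$ is independent of $\theta$. For a contraction $C$: $D_C=I-C^*C$, $d=\operatorname{rank}D_C$, $B_C$ is a $d\times n$ matrix of full row rank with $B_C^*B_C=D_C$ (matrix of $D_C^{1/2}$ on $\operatorname{Im}D_C$, zero on its complement), $\mathcal{A}(C)=\begin{bmatrix}0&B_C\\0&C\end{bmatrix}$, and the partial isometry tower is $T_0=C$, $T_{j+1}=\mathcal{A}(T_j)$. *)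

From mathcomp Require Import all_boot all_algebra.
From mathcomp Require Import reals trigo.
From mathcomp.real_closed Require Import complex.
Set Implicit Arguments. Unset Strict Implicit. Unset Printing Implicit Defensive.
Import GRing.Theory Num.Theory.
Local Open Scope ring_scope.

Section Defs.
Variable R : realType.
Local Notation C := (R[i]).

Definition adjmx m p (X : 'M[C]_(m, p)) : 'M[C]_(p, m) := (map_mx Num.conj X)^T.

Definition expi (t : R) : C := (Complex (cos t) (sin t)).

Definition Hmx m (X : 'M[C]_m) (t : R) : 'M[C]_m :=
  2^-1 *: (expi (- t) *: X + expi t *: adjmx X).

Definition spectrum m (X : 'M[C]_m) : C -> bool := fun a => eigenvalue X a.

Definition circular m (X : 'M[C]_m) : Prop :=
  forall t1 t2 : R, spectrum (Hmx X t1) =1 spectrum (Hmx X t2).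

(* contraction: ||C|| <= 1, i.e. ||C v||^2 <= ||v||^2 for every vector v *)
Definition contraction m (X : 'M[C]_m) : Prop :=
  forall v : 'cV[C]_m,
    (adjmx (X *m v) *m (X *m v)) 0 0 <= (adjmx v *m v) 0 0.

Definition defect m (X : 'M[C]_m) : 'M[C]_m := 1%:M - adjmx X *m X.

Definition defect_pencil_circular m (X : 'M[C]_m) : Prop :=
  forall tau : R, forall t1 t2 : R,
    spectrum (Hmx X t1 + (tau%:C)%C *: defect X)
    =1 spectrum (Hmx X t2 + (tau%:C)%C *: defect X).

Definition sqmx := {m : nat & 'M[C]_m}.

Definition tower_step (X Y : sqmx) : Prop :=
  exists B : 'M[C]_(\rank (defect (projT2 X)), projT1 X),
    [/\ adjmx B *m B = defect (projT2 X),
        row_free B &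
        Y = existT _ _ (block_mx 0 B 0 (projT2 X))].

Definition is_tower m (X : 'M[C]_m) (T : nat -> sqmx) : Prop :=
  T 0%N = existT _ m X /\ forall j, tower_step (T j) (T j.+1).

End Defs.

From mathcomp Require Import all_boot all_order all_algebra.
From mathcomp Require Import boolp reals trigo ring lra.
From mathcomp.real_closed Require Import complex.
Set Implicit Arguments. Unset Strict Implicit. Unset Printing Implicit Defensive.
Import Order.TTheory GRing.Theory Num.Theory.
Local Open Scope ring_scope.
Local Open Scope sesquilinear_scope.

(** If Y = A(X) with B^* B = D_X, then D_Y = diag(I, 0), and a Schur complement
    computation gives, for l <> s,
      det (l - H_Y(t) - s D_Y) = (l - s)^d det (l - H_X(t) - (4 (l - s))^-1 D_X).
    Iterating along the tower from s = 0, the characteristic polynomial of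
    H_{T_j}(t) at a real l >= 1 is a nonzero multiple, independent of t, of that
    of H_X(t) + s_j D_X at l, where s_j is the j-th iterate of s |-> (4 (l - s))^-1
    from 0; the s_j are pairwise distinct.  So if all levels are circular, the
    polynomial s |-> det (l - H_X(t) - s D_X) does not depend on t at the points
    s_j, hence not at all; conversely defect-pencil circularity makes every level
    circular.  Spectra and characteristic polynomials are interchangeable here:
    when the spectrum of H_X(t) + K does not depend on t, its characteristic
    polynomial takes finitely many values, one of them at infinitely many t, and
    e^{imt} times its value at any point is a polynomial in e^{it}, which forces
    it to be constant. *)

Definition frequently (P : nat -> Prop) := forall N, exists2 k, (N <= k)%N & P k.

Lemma finite_range_frequently (T : eqType) (s : seq T) (f : nat -> T) :
  (forall k, f k \in s) -> exists2 x, x \in s & frequently (fun k => f k = x).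
Proof.
move=> fs; have {fs} : forall k, (0 <= k)%N -> f k \in s by move=> k _; apply: fs.
elim: s 0%N => [|y s IHs] N0 fs; first by have := fs N0 (leqnn _).
have [fy|/existsNP[N1 notfy]] := pselect (frequently (fun k => f k = y)).
  by exists y; rewrite ?mem_head.
have [|x xs fx] := IHs (maxn N0 N1); last by exists x; rewrite ?inE ?xs ?orbT.
move=> k; rewrite geq_max => /andP[k_ge0 k_ge1].
have := fs k k_ge0; rewrite inE => /orP[/eqP fky|//].
by case: notfy; exists k.
Qed.

Lemma poly_eq_frequently (F : idomainType) (f : nat -> F) (P : nat -> Prop)
    (p q : {poly F}) :
  injective f -> frequently P -> (forall k, P k -> p.[f k] = q.[f k]) -> p = q.
Proof.
move=> f_inj freqP pq; apply/eqP; rewrite -subr_eq0; apply/eqP.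
have [ks [ks_uniq ks_size ksP]] : exists ks : seq nat,
    [/\ uniq ks, size ks = size (p - q) & {in ks, forall k, P k}].
  elim: (size (p - q)) => [|n [ks [ks_uniq ks_size ksP]]]; first by exists [::].
  have [k k_gt kP] := freqP (\max_(i <- ks) i).+1.
  exists (k :: ks); split=> /=; last by move=> i; rewrite inE => /orP[/eqP->|/ksP].
    rewrite ks_uniq andbT; apply: contraTN k_gt => k_ks.
    by rewrite -leqNgt (leq_bigmax_seq (F := id) _ k_ks).
  by rewrite ks_size.
apply: (roots_geq_poly_eq0 (rs := map f ks)).
- by apply/allP => _ /mapP[k /ksP kP ->]; rewrite rootE hornerD hornerN pq // subrr.
- by rewrite map_inj_uniq.
- by rewrite size_map ks_size.
Qed.

Lemma poly_eq_inj (F : idomainType) (f : nat -> F) (p q : {poly F}) :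
  injective f -> (forall k, p.[f k] = q.[f k]) -> p = q.
Proof.
move=> f_inj pq; apply: (poly_eq_frequently (P := fun=> True) f_inj) => [N|k _].
  by exists N.
exact: pq.
Qed.

Definition split_polys (F : nzRingType) (S : seq F) m : seq {poly F} :=
  [seq \prod_(i < m) ('X - (val (c i))%:P) | c : {ffun 'I_m -> seq_sub S}].

Lemma split_polysP (F : closedFieldType) (S : seq F) m (p : {poly F}) :
  p \is monic -> size p = m.+1 -> (forall z, root p z -> z \in S) ->
  p \in split_polys S m.
Proof.
move=> p_monic p_size rootsS; have [rs p_prod] := closed_field_poly_normal p.
rewrite (monicP p_monic) scale1r in p_prod.
have rs_size : size rs = m.
  by apply: succn_inj; rewrite -p_size p_prod size_prod_XsubC.
have rsS (i : 'I_m) : rs`_i \in S.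
  by apply: rootsS; rewrite p_prod root_prod_XsubC mem_nth ?rs_size.
apply/mapP; exists [ffun i => SeqSub (rsS i)]; first exact: mem_enum.
rewrite p_prod (big_nth 0) rs_size big_mkord.
by apply: eq_bigr => i _; rewrite ffunE.
Qed.

Lemma horner_char_poly (F : comNzRingType) m (A : 'M[F]_m) x :
  (char_poly A).[x] = \det (x%:M - A).
Proof.
rewrite /char_poly -horner_evalE -det_map_mx; congr (\det _).
apply/matrixP=> i j.
by rewrite !mxE /= horner_evalE hornerD hornerN hornerMn hornerX hornerC.
Qed.

Lemma horner_det_pencil (F : comNzRingType) m (A B : 'M[F]_m) s :
  (\det (map_mx polyC A - 'X *: map_mx polyC B)).[s] = \det (A - s *: B).
Proof.
rewrite -horner_evalE -det_map_mx; congr (\det _).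
apply/matrixP => i j; rewrite !mxE /= horner_evalE.
by rewrite hornerD hornerN hornerM hornerX !hornerC mulrC.
Qed.

Lemma trmxC_mul (C : numClosedFieldType) p m q (A : 'M[C]_(p, m)) (B : 'M[C]_(m, q)) :
  (A *m B) ^t* = B ^t* *m A ^t*.
Proof. by rewrite trmx_mul map_mxM. Qed.

Section PsdGramFactor.
Variables (C : numClosedFieldType) (m : nat) (D : 'M[C]_m).
Hypothesis D_herm : D ^t* = D.
Hypothesis D_psd : forall v : 'cV[C]_m, 0 <= (v ^t* *m D *m v) 0 0.

Let P := spectralmx D.
Let x := spectral_diag D.
Let P_unitary : P \is unitarymx := spectral_unitarymx D.

Let D_spectral : D = P ^t* *m diag_mx x *m P.
Proof.
rewrite -invmx_unitary //; apply/orthomx_spectralP/normalmxP.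
by rewrite D_herm.
Qed.

Let conj_spectral A B :
  P ^t* *m A *m P *m (P ^t* *m B *m P) = P ^t* *m (A *m B) *m P.
Proof. by rewrite -!mulmxA (mulmxA P) (unitarymxP P_unitary) mul1mx !mulmxA. Qed.

Let x_ge0 i : 0 <= x 0 i.
Proof.
have -> : x 0 i = (P *m D *m P ^t*) i i.
  rewrite D_spectral !mulmxA mulmxtVK // (unitarymxP P_unitary) mul1mx.
  by rewrite mxE eqxx mulr1n.
have := D_psd ((row i P) ^t*); rewrite trmxCK -row_mul.
suff -> : (row i (P *m D) *m (row i P) ^t*) 0 0 = (P *m D *m P ^t*) i i by [].
by rewrite !mxE; apply: eq_bigr => k _; rewrite !mxE.
Qed.

Let Q := P ^t* *m diag_mx (\row_i sqrtC (x 0 i)) *m P.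

Let Q_herm : Q ^t* = Q.
Proof.
rewrite /Q !trmxC_mul trmxCK mulmxA tr_diag_mx map_diag_mx; congr (_ *m diag_mx _ *m _).
by apply/rowP => i; rewrite !mxE; apply: geC0_conj; rewrite sqrtC_ge0.
Qed.

Let Q_sqr : Q *m Q = D.
Proof.
rewrite /Q conj_spectral mulmx_diag [in RHS]D_spectral; congr (_ *m diag_mx _ *m _).
by apply/rowP => i; rewrite !mxE -expr2 sqrtCK.
Qed.

Let Q_sub : (Q <= D)%MS.
Proof.
apply/submxP; exists (P ^t* *m diag_mx (\row_i (sqrtC (x 0 i))^-1) *m P).
rewrite /Q [in RHS]D_spectral conj_spectral mulmx_diag; congr (_ *m diag_mx _ *m _).
apply/rowP => i; rewrite !mxE; have [sqrt0|sqrt_neq0] := eqVneq (sqrtC (x 0 i)) 0.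
  by rewrite sqrt0 invr0 mul0r. (* relies on 0^-1 = 0 *)
by rewrite -[X in _ * X]sqrtCK expr2 mulKf.
Qed.

Let W := schmidt (row_base D).

Let W_proj : W ^t* *m W *m Q = Q.
Proof.
have W_unitary : W \is unitarymx := schmidt_unitarymx (row_base D) (rank_leq_col D).
have Q_W : (Q <= W)%MS.
  by rewrite (eqmx_schmidt_free (row_base_free D)) eq_row_base Q_sub.
have QW : Q *m W ^t* *m W = Q.
  by rewrite -[in LHS](mulmxKpV Q_W) mulmxtVK // mulmxKpV.
by have := congr1 (fun M => M ^t*) QW; rewrite /= trmxC_mul (trmxC_mul Q) trmxCK Q_herm mulmxA.
Qed.

Lemma psd_gram_factor :
  exists B : 'M[C]_(\rank D, m), B ^t* *m B = D /\ row_free B.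
Proof.
have gramWQ : (W *m Q) ^t* *m (W *m Q) = D.
  by rewrite trmxC_mul Q_herm -mulmxA (mulmxA _ W) W_proj Q_sqr.
exists (W *m Q); split=> //.
by rewrite /row_free eqn_leq rank_leq_row -{1}gramWQ mxrankM_maxr.
Qed.

End PsdGramFactor.

Section ComplexMatrices.
Variable R : realType.
Local Notation C := R[i].

Lemma expi_neq0 (t : R) : expi t != 0.
Proof.
apply/negP; rewrite eq_complex /= => /andP[/eqP cos0 /eqP sin0].
by have /eqP := cos2Dsin2 t; rewrite cos0 sin0 expr0n add0r eq_sym oner_eq0.
Qed.

Lemma expiN (t : R) : expi (- t) = (expi t)^-1.
Proof.
apply: (mulIf (expi_neq0 t)); rewrite mulVf ?expi_neq0 //.
apply/eqP; rewrite eq_complex /= cosN sinN; apply/andP; split; apply/eqP.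
  by rewrite mulNr opprK -!expr2 cos2Dsin2.
by rewrite mulNr mulrC subrr.
Qed.

Definition angle (k : nat) : R := pi / k.+1%:R.

Lemma expi_angle_inj : injective (fun k => expi (angle k)).
Proof.
have angle_itv k : angle k \in `[0, pi].
  have pi_ge0 := ltW (pi_gt0 R).
  rewrite in_itv /= /angle divr_ge0 //= ler_pdivrMr ?ltr0Sn //.
  by rewrite ler_peMr // ler1n.
move=> j k [/cos_inj eq_cos _]; move: eq_cos => /(_ (angle_itv j) (angle_itv k)).
move/(mulfI (lt0r_neq0 (pi_gt0 R)))/invr_inj/eqP.
by rewrite eqr_nat => /eqP[].
Qed.

Lemma adjmxE m p (A : 'M[C]_(m, p)) : adjmx A = A ^t*.
Proof. by rewrite /adjmx map_trmx. Qed.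

Lemma adjmx0 m p : adjmx (0 : 'M[C]_(m, p)) = 0.
Proof. by rewrite /adjmx map_mx0 trmx0. Qed.

Lemma adjmxM m p q (A : 'M[C]_(m, p)) (B : 'M[C]_(p, q)) :
  adjmx (A *m B) = adjmx B *m adjmx A.
Proof. by rewrite !adjmxE trmxC_mul. Qed.

Lemma adjmx_block m1 m2 n1 n2 (A : 'M[C]_(m1, n1)) (B : 'M[C]_(m1, n2))
    (A' : 'M[C]_(m2, n1)) (B' : 'M[C]_(m2, n2)) :
  adjmx (block_mx A B A' B') = block_mx (adjmx A) (adjmx A') (adjmx B) (adjmx B').
Proof. by rewrite /adjmx map_block_mx tr_block_mx. Qed.

Lemma adjmx_col m1 m2 p (A : 'M[C]_(m1, p)) (B : 'M[C]_(m2, p)) :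
  adjmx (col_mx A B) = row_mx (adjmx A) (adjmx B).
Proof. by rewrite /adjmx map_col_mx tr_col_mx. Qed.

Lemma adjmx_defect m (X : 'M[C]_m) : adjmx (defect X) = defect X.
Proof.
rewrite /defect [in LHS]adjmxE linearB /= map_mxB trmx1 map_mx1 trmxC_mul.
by rewrite adjmxE trmxCK.
Qed.

Lemma contractionE m (X : 'M[C]_m) :
  contraction X <-> forall v : 'cV[C]_m, 0 <= (adjmx v *m defect X *m v) 0 0.
Proof.
have defectE v : (adjmx v *m defect X *m v) 0 0 =
    (adjmx v *m v) 0 0 - (adjmx (X *m v) *m (X *m v)) 0 0.
  rewrite /defect mulmxBr mulmxBl mulmx1 adjmxM !mulmxA.
  by rewrite [LHS]mxE [X in _ + X]mxE.
by split=> contrX v; move: (contrX v); rewrite defectE subr_ge0.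
Qed.

End ComplexMatrices.

Section IsospectralCharPoly.
Variables (R : realType) (m : nat) (X K : 'M[R[i]]_m).

(* At z = expi t this is z (x - (Hmx X t + K)), see horner_det_circle_charmx. *)
Definition circle_charmx (x : R[i]) : 'M[{poly R[i]}]_m := \matrix_(i, j)
  ((x *+ (i == j)) *: 'X - (2^-1 * X i j)%:P - (2^-1 * adjmx X i j) *: 'X^2
   - K i j *: 'X).

Lemma horner_det_circle_charmx x t :
  (\det (circle_charmx x)).[expi t] = expi t ^+ m * (char_poly (Hmx X t + K)).[x].
Proof.
rewrite horner_char_poly -detZ -horner_evalE -det_map_mx; congr (\det _).
apply/matrixP => i j; rewrite !mxE /= horner_evalE expiN.
rewrite !(hornerD, hornerN, hornerZ, hornerX, hornerC, hornerXn).
by field; apply: expi_neq0.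
Qed.

Hypothesis isospectral : forall t1 t2,
  spectrum (Hmx X t1 + K) =1 spectrum (Hmx X t2 + K).

Lemma isospectral_char_poly t1 t2 :
  char_poly (Hmx X t1 + K) = char_poly (Hmx X t2 + K).
Proof.
have [S charS0] := closed_field_poly_normal (char_poly (Hmx X 0 + K)).
rewrite (monicP (char_poly_monic _)) scale1r in charS0.
have charS t : char_poly (Hmx X t + K) \in split_polys S m.
  apply: split_polysP; [exact: char_poly_monic | exact: size_char_poly |] => z.
  rewrite -eigenvalue_root_char -/(spectrum _ z) (isospectral t 0).
  by rewrite /spectrum eigenvalue_root_char charS0 root_prod_XsubC.
have [P _ freqP] := finite_range_frequently (fun k => charS (angle R k)).
have detP x : \det (circle_charmx x) = 'X^m * (P.[x])%:P.
  apply: (poly_eq_frequently (@expi_angle_inj R) freqP) => k charP.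
  by rewrite horner_det_circle_charmx charP hornerM hornerXn hornerC.
have charP t : char_poly (Hmx X t + K) = P.
  apply: (@poly_eq_inj _ (fun k => k%:R)) => [i j /eqP|x].
    by rewrite eqr_nat => /eqP.
  apply: (mulfI (expf_neq0 m (expi_neq0 t))).
  by rewrite -horner_det_circle_charmx detP hornerM hornerXn hornerC.
exact: etrans (charP t1) (esym (charP t2)).
Qed.

End IsospectralCharPoly.

Section Circularity.
Variable R : realType.
Local Notation C := R[i].
Local Open Scope complex_scope.

(* Rewriting with an equation between the values at t1 and t2 is done on one
   side only ([in LHS], [in RHS]) or after generalizing: otherwise matching
   the other side unfolds cos and sin and does not terminate in practice. *)
Lemma Hmx_isospectralE m (X K : 'M[C]_m) :
  (forall t1 t2, spectrum (Hmx X t1 + K) =1 spectrum (Hmx X t2 + K)) <->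
  (forall t1 t2, char_poly (Hmx X t1 + K) = char_poly (Hmx X t2 + K)).
Proof.
split=> [isoX t1 t2|charE t1 t2 z]; first exact: isospectral_char_poly isoX t1 t2.
rewrite /spectrum [LHS]eigenvalue_root_char [RHS]eigenvalue_root_char.
by rewrite [in LHS](charE t1 t2).
Qed.

Lemma circularE m (X : 'M[C]_m) :
  circular X <-> forall t1 t2, char_poly (Hmx X t1) = char_poly (Hmx X t2).
Proof.
split=> [circX t1 t2|charE t1 t2].
  have isoX a b : spectrum (Hmx X a + 0) =1 spectrum (Hmx X b + 0).
    by move=> z; rewrite [in LHS]addr0 [in RHS]addr0; apply: circX.
  have := isospectral_char_poly isoX t1 t2.
  by move: (Hmx X t1) (Hmx X t2) => A1 A2; rewrite !addr0.
have charX a b : char_poly (Hmx X a + 0) = char_poly (Hmx X b + 0).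
  by rewrite [in LHS]addr0 [in RHS]addr0; apply: charE.
have := (Hmx_isospectralE X 0).2 charX t1 t2.
by move: (Hmx X t1) (Hmx X t2) => A1 A2; rewrite !addr0.
Qed.

Lemma defect_pencil_circularE m (X : 'M[C]_m) :
  defect_pencil_circular X <-> forall (tau t1 t2 : R),
    char_poly (Hmx X t1 + tau%:C *: defect X) = char_poly (Hmx X t2 + tau%:C *: defect X).
Proof. by split=> pencilX tau; apply/Hmx_isospectralE. Qed.

Lemma char_poly_eq_ge1 m (A B : 'M[C]_m) :
  (forall l : R, 1 <= l -> (char_poly A).[l%:C] = (char_poly B).[l%:C]) ->
  char_poly A = char_poly B.
Proof.
move=> AB; apply: (@poly_eq_inj _ (fun k => (k.+1%:R : R)%:C)) => [j k|k].
  by move/complexI/eqP; rewrite eqr_nat => /eqP[].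
by apply: AB; rewrite ler1n.
Qed.

End Circularity.

Section TowerStep.
Variables (R : realType) (d m : nat) (X : 'M[R[i]]_m) (B : 'M[R[i]]_(d, m)).
Hypothesis gramB : adjmx B *m B = defect X.
Let Y : 'M[R[i]]_(d + m) := block_mx 0 B 0 X.

Lemma defect_tower_step : defect Y = block_mx 1%:M 0 0 0.
Proof.
rewrite /defect /Y adjmx_block !adjmx0 mulmx_block !mul0mx !mulmx0 !addr0.
rewrite gramB /defect subrK (scalar_mx_block d m) opp_block_mx add_block_mx.
by rewrite !oppr0 !addr0 subrr.
Qed.

Lemma Hmx_tower_step t : Hmx Y t =
  block_mx 0 ((2^-1 * expi (- t)) *: B) ((2^-1 * expi t) *: adjmx B) (Hmx X t).
Proof.
rewrite /Hmx /Y adjmx_block !adjmx0 !scale_block_mx add_block_mx scale_block_mx.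
by rewrite !scaler0 addr0 add0r addr0 scaler0 !scalerA.
Qed.

Lemma horner_char_poly_tower_step t (l s : R[i]) : l != s ->
  (char_poly (Hmx Y t + s *: defect Y)).[l] =
  (l - s) ^+ d * (char_poly (Hmx X t + (4 * (l - s))^-1 *: defect X)).[l].
Proof.
rewrite -subr_eq0 !horner_char_poly => ls_neq0; set c := l - s.
set a := 2^-1 * expi (- t); set b := 2^-1 * expi t.
have ab : a * b / c = (4 * c)^-1.
  by rewrite /a /b mulrACA expiN mulVf ?expi_neq0 // mulr1 -!invfM -natrM.
rewrite Hmx_tower_step defect_tower_step scale_block_mx (scalar_mx_block d m).
rewrite !scaler0 add_block_mx !addr0 add0r -/a -/b opp_block_mx add_block_mx !add0r.
rewrite scalemx1 -raddfB /= -/c.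
(* S is the Schur complement of the invertible top-left block c%:M. *)
pose L : 'M[R[i]]_(m, d) := (- b / c) *: adjmx B.
pose S := l%:M - Hmx X t - (a * b / c) *: (adjmx B *m B).
have -> : block_mx c%:M (- (a *: B)) (- (b *: adjmx B)) (l%:M - Hmx X t) =
    block_mx 1%:M 0 L 1%:M *m block_mx c%:M (- (a *: B)) 0 S.
  rewrite mulmx_block !mul1mx !mul0mx !addr0; congr block_mx.
    by rewrite /L mul_mx_scalar scalerA mulrC divfK // scaleNr.
  rewrite /S /L mulmxN -scalemxAl -scalemxAr scalerA.
  have -> : - b / c * a = - (a * b / c) by ring.
  by rewrite scaleNr opprK [RHS]addrC subrK.
rewrite det_mulmx det_lblock det_ublock !det_scalar !expr1n !mul1r.
by rewrite /S gramB ab opprD addrA.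
Qed.

Lemma contraction_tower_step : contraction Y.
Proof.
apply/contractionE => v.
rewrite defect_tower_step -[v]vsubmxK adjmx_col mul_row_block !mulmx0 !addr0.
rewrite mulmx1 mul_row_col mul0mx addr0 !mxE; apply: sumr_ge0 => i _.
by rewrite !mxE mulrC; apply: mul_conjC_ge0.
Qed.

End TowerStep.

Section SchurShift.
Variables (R : realType) (l : R).

Definition schur_shift (tau : R) := (4 * (l - tau))^-1.

Definition schur_orbit j := iter j schur_shift 0.

Lemma schur_shift_lt a b :
  1 <= l -> a < b -> b <= 2^-1 -> schur_shift a < schur_shift b.
Proof.
have half_lt1 : 2^-1 < 1 :> R by rewrite invf_lt1 ?ltr1n.
move=> l_ge1 ab b_le; have b_pos : 0 < 4 * (l - b) by lra.
have ba : 4 * (l - b) < 4 * (l - a) by lra.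
by rewrite /schur_shift ltf_pV2 ?posrE ?(lt_trans b_pos ba).
Qed.

Lemma schur_shift_itv tau :
  1 <= l -> 0 <= tau <= 2^-1 -> 0 <= schur_shift tau <= 2^-1.
Proof.
have half_lt1 : 2^-1 < 1 :> R by rewrite invf_lt1 ?ltr1n.
move=> l_ge1 /andP[tau_ge0 tau_le]; have tau_pos : 0 < 4 * (l - tau) by lra.
have tau_ge2 : 2 <= 4 * (l - tau) by lra.
by rewrite /schur_shift invr_ge0 ltW // lef_pV2 ?posrE.
Qed.

Lemma schur_orbit_itv j : 1 <= l -> 0 <= schur_orbit j <= 2^-1.
Proof.
move=> l_ge1; elim: j => [|j IHj]; last exact: schur_shift_itv.
by rewrite /= lexx invr_ge0 ler0n.
Qed.

Lemma schur_orbit_inj : 1 <= l -> injective schur_orbit.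
Proof.
move=> l_ge1; have orbitS j : schur_orbit j < schur_orbit j.+1.
  elim: j => [|j IHj]; last first.
    by apply: schur_shift_lt => //; case/andP: (schur_orbit_itv j.+1 l_ge1).
  by rewrite /= /schur_shift invr_gt0; lra.
have orbit_lt := homo_ltn lt_trans orbitS.
move=> j k jk; case: (ltngtP j k) => [/orbit_lt|/orbit_lt|//]; by rewrite jk ltxx.
Qed.

End SchurShift.

Section Tower.
Variables (R : realType) (n : nat) (X : 'M[R[i]]_n) (T : nat -> sqmx R).
Hypothesis towerT : is_tower X T.
Local Open Scope complex_scope.

Lemma tower_char_poly (l : R) j : 1 <= l -> exists2 c : R[i], c != 0 &
  forall t, (char_poly (Hmx (projT2 (T j)) t)).[l%:C] =
            c * (char_poly (Hmx X t + (schur_orbit l j)%:C *: defect X)).[l%:C].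
Proof.
move=> l_ge1; suff orbitP tau : 0 <= tau <= 2^-1 -> exists2 c : R[i], c != 0 &
    forall t, (char_poly (Hmx (projT2 (T j)) t + tau%:C *: defect (projT2 (T j)))).[l%:C]
    = c * (char_poly (Hmx X t + (iter j (schur_shift l) tau)%:C *: defect X)).[l%:C].
  have [|c c_neq0 Ec] := orbitP 0; first by rewrite lexx invr_ge0 ler0n.
  by exists c => // t; rewrite -[RHS]Ec rmorph0 scale0r addr0.
case: towerT => T0 Tstep; elim: j tau => [|j IHj] tau tau_itv.
  by rewrite T0; exists 1 => [|t]; rewrite ?oner_neq0 ?mul1r.
have [B [gramB _ ->]] := Tstep j.
have [c c_neq0 Ec] := IHj _ (schur_shift_itv l_ge1 tau_itv).
have l_neq_tau : l%:C != tau%:C.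
  have half_lt1 : 2^-1 < 1 :> R by rewrite invf_lt1 ?ltr1n.
  by rewrite (inj_eq (@complexI R)) gt_eqF //; case/andP: tau_itv => _ tau_le; lra.
exists ((l%:C - tau%:C) ^+ \rank (defect (projT2 (T j))) * c).
  by rewrite mulf_neq0 // expf_neq0 // subr_eq0.
have shiftE : (4 * (l%:C - tau%:C))^-1 = (schur_shift l tau)%:C.
  by rewrite /schur_shift fmorphV rmorphM rmorphB rmorph_nat.
by move=> t; rewrite horner_char_poly_tower_step // shiftE Ec iterSr mulrA.
Qed.

Lemma defect_pencil_circular_tower :
  defect_pencil_circular X -> forall j, circular (projT2 (T j)).
Proof.
move=> /defect_pencil_circularE pencilX j; apply/circularE => t1 t2.
apply: char_poly_eq_ge1 => l l_ge1; have [c _ Ec] := tower_char_poly j l_ge1.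
by rewrite [LHS](Ec t1) [RHS](Ec t2) [in LHS](pencilX _ t1 t2).
Qed.

Lemma tower_defect_pencil_circular :
  (forall j, circular (projT2 (T j))) -> defect_pencil_circular X.
Proof.
move=> circT; apply/defect_pencil_circularE => tau t1 t2.
apply: char_poly_eq_ge1 => l l_ge1.
pose pencil t := \det (map_mx polyC (l%:C%:M - Hmx X t) - 'X *: map_mx polyC (defect X)).
have pencilE t s : (pencil t).[s] = (char_poly (Hmx X t + s *: defect X)).[l%:C].
  by rewrite horner_det_pencil horner_char_poly opprD addrA.
rewrite -[LHS](pencilE t1) -[RHS](pencilE t2); apply: (congr1 (horner^~ tau%:C)).
apply: (@poly_eq_inj _ (fun j => (schur_orbit l j)%:C)) => [j k /complexI|j].
  exact: schur_orbit_inj.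
have [c c_neq0 Ec] := tower_char_poly j l_ge1.
apply: (mulfI c_neq0); rewrite [in LHS]pencilE [in RHS]pencilE -[LHS]Ec -[RHS]Ec.
by rewrite [in LHS]((circularE _).1 (circT j) t1 t2).
Qed.

End Tower.

Section TowerExistence.
Variable R : realType.
Local Notation C := R[i].

Lemma exists_tower_step (Y : sqmx R) :
  contraction (projT2 Y) -> exists Z, tower_step Y Z /\ contraction (projT2 Z).
Proof.
move=> /contractionE contrY.
have D_herm : (defect (projT2 Y)) ^t* = defect (projT2 Y).
  by rewrite -adjmxE adjmx_defect.
have D_psd (v : 'cV[C]_(projT1 Y)) : 0 <= (v ^t* *m defect (projT2 Y) *m v) 0 0.
  by have := contrY v; rewrite adjmxE.
have [B [gramB freeB]] := psd_gram_factor D_herm D_psd; rewrite -adjmxE in gramB.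
exists (existT _ _ (block_mx 0 B 0 (projT2 Y)) : sqmx R); split.
  by exists B; split.
exact: contraction_tower_step gramB.
Qed.

Lemma exists_tower n (X : 'M[C]_n) : contraction X -> exists T, is_tower X T.
Proof.
move=> contrX.
have [next nextP] : {next : sqmx R -> sqmx R & forall Y, contraction (projT2 Y) ->
    tower_step Y (next Y) /\ contraction (projT2 (next Y))}.
  apply: (@choice _ _ (fun Y Z =>
    contraction (projT2 Y) -> tower_step Y Z /\ contraction (projT2 Z))) => Y.
  have [/exists_tower_step[Z stepZ]|notY] := pselect (contraction (projT2 Y)).
    by exists Z.
  by exists Y => /notY.
pose T j := iter j next (existT _ n X).
have contrT j : contraction (projT2 (T j)).
  by elim: j => [|j IHj] //=; have [] := nextP _ IHj.
by exists T; split=> // j; have [] := nextP _ (contrT j).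
Qed.

End TowerExistence.

Theorem mainTheorem4 (R : realType) (n : nat) (X : 'M[R[i]]_n) :
  contraction X ->
  ((forall T : nat -> sqmx R, is_tower X T -> forall j : nat, circular (projT2 (T j)))
   <-> defect_pencil_circular X).
Proof.
move=> contrX; split=> [circT|pencilX T towerT].
  have [T towerT] := exists_tower contrX.
  exact: tower_defect_pencil_circular towerT (circT T towerT).
exact: defect_pencil_circular_tower towerT pencilX.
Qed.
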